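(* Let $M$ be a Peano continuum. Every cut pair of $M$ is contained in a unique cyclic element of $M$.
   Context: A Peano continuum is a compact, connected, locally connected metrizable space. A (global) cut point of $M$ is $\eta\in M$ with $M\setminus\{\eta\}$ disconnected. A cyclic element is a subset $C\subseteq M$ that either consists of a single cut point, or contains a non-cut point $p$ together with all points $q$ not separated from $p$ by any cut point of $M$. A cut pair is a set of two distinct points $\{\zeta,\xi\}$ such that $M\setminus\{\zeta,\xi\}$ is disconnected but neither $\zeta$ nor $\xi$ is a cut point of $M$. *)

From HB Require Import structures.
From mathcomp Require Import all_boot all_order all_algebra.
From mathcomp Require Import all_classical all_reals all_analysis.
Set Implicit Arguments. Unset Strict Implicit. Unset Printing Implicit Defensive.
Local Open Scope classical_set_scope.

Section Peano.
Context {T : topologicalType}.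

Definition locally_connected_space : Prop :=
  forall (x : T) (U : set T), nbhs x U ->
    exists V : set T, [/\ open V, V x, connected V & V `<=` U].

(* M = the whole space T *)
Definition cut_point (eta : T) : Prop := ~ connected (~` [set eta]).

Definition separates (c p q : T) : Prop :=
  exists A B : set T, [/\ ~` [set c] = A `|` B, separated A B, A p & B q].

Definition cyclic_element (C : set T) : Prop :=
  (exists eta, cut_point eta /\ C = [set eta]) \/
  (exists p, ~ cut_point p /\ C p /\
     C = [set q | forall c, cut_point c -> ~ separates c p q]).

Definition cut_pair (zeta xi : T) : Prop :=
  [/\ zeta <> xi, ~ connected (~` [set zeta; xi]), ~ cut_point zeta
    & ~ cut_point xi].

End Peano.

(* A Peano continuum: a compact, connected, locally connected metric space.
   Metrizability: T carries a pseudometric inducing its topology, and is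
   Hausdorff (so the pseudometric is a metric). *)
Definition peano_continuum {R : realType} (T : pseudoMetricType R) : Prop :=
  [/\ hausdorff_space T, compact [set: T], connected [set: T]
    & locally_connected_space (T := T)].

(* If a cut point c separated the points of a cut pair {ζ, ξ}, say
   M \ {c} = A ∪ B with ζ ∈ A and ξ ∈ B, write M \ {ζ, ξ} = P ∪ Q with c ∈ P.
   A point of Q lies in A or in B; if it lies in A then M \ {ζ} splits into the
   separated nonempty sets Q ∩ A and its complement, which lies in P ∪ B, so ζ
   is a cut point (symmetrically ξ is one otherwise).  Hence ξ lies in the
   cyclic element C(ζ) of the non-cut point ζ, and every cyclic element
   containing a non-cut point p is C(p). *)
From mathcomp Require Import all_boot all_order all_algebra.
From mathcomp Require Import all_classical all_reals all_analysis.
Local Open Scope classical_set_scope.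

Section CutPairs.
Context {T : topologicalType}.
Implicit Types (A B P Q X Y : set T) (c p q zeta xi : T).

Lemma separatedS {A B X Y} :
  separated A B -> X `<=` A -> Y `<=` B -> separated X Y.
Proof.
move=> [AB1 AB2] XA YB; split; apply/disjoints_subset => x.
- move=> /(closureS XA) cAx /YB Bx.
  by move: AB1; apply/eqP/set0P; exists x.
- move=> /XA Ax /(closureS YB) cBx.
  by move: AB2; apply/eqP/set0P; exists x.
Qed.

Lemma separatedIU {A B P Q} :
  separated A B -> separated P Q -> separated (A `&` P) (B `|` Q).
Proof.
move=> [AB1 AB2] [PQ1 PQ2]; split; apply/disjoints_subset => x.
- move=> /closureI[cAx cPx] [Bx|Qx].
  + by move: AB1; apply/eqP/set0P; exists x.
  + by move: PQ1; apply/eqP/set0P; exists x.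
- move=> [Ax Px]; rewrite closureU => -[cBx|cQx].
  + by move: AB2; apply/eqP/set0P; exists x.
  + by move: PQ2; apply/eqP/set0P; exists x.
Qed.

Lemma separated_neq {A B x y} : separated A B -> A x -> B y -> x <> y.
Proof.
move=> sAB Ax By e; move/separated_disjoint: sAB; apply/eqP/set0P.
by exists x; split; rewrite // e.
Qed.

Lemma separated_not_connected X Y :
  X !=set0 -> Y !=set0 -> separated X Y -> ~ connected (X `|` Y).
Proof.
move=> X0 Y0 sXY; apply/connectedPn.
by exists (fun b => if b then Y else X); split => // -[].
Qed.

Lemma not_connected_split {A c} : ~ connected A -> A c ->
  exists P Q, [/\ A = P `|` Q, separated P Q, P c & Q !=set0].
Proof.
move=> /connectedPn[E [E0 AE sE]]; rewrite AE => -[Ec|Ec].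
- by exists (E false), (E true).
- by exists (E true), (E false); rewrite setUC separatedC.
Qed.

Lemma separatesC c p q : separates c p q -> separates c q p.
Proof.
move=> [A [B [cAB sAB Ap Bq]]].
by exists B, A; rewrite setUC separatedC.
Qed.

Lemma cut_point_of_crossing_separations {zeta xi c A B P Q} :
  ~` [set c] = A `|` B -> separated A B -> A zeta -> B xi ->
  ~` [set zeta; xi] = P `|` Q -> separated P Q -> P c ->
  Q `&` A !=set0 -> cut_point zeta.
Proof.
move=> cAB sAB Azeta Bxi zxPQ sPQ Pc QA0.
have Q_zx : Q `<=` ~` [set zeta; xi] by rewrite zxPQ => x Qx; right.
have zeta_xi := separated_neq sAB Azeta Bxi.
have QA_zeta : Q `&` A `<=` ~` [set zeta].
  by move=> x [/Q_zx zx_x _] x_zeta; apply: zx_x; left.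
rewrite /cut_point -(setDUK QA_zeta).
apply: separated_not_connected => //.
  by exists xi; split => [/esym/zeta_xi//|[/Q_zx zx_xi _]]; apply: zx_xi; right.
rewrite separatedC in sPQ.
apply: (separatedS (separatedIU sPQ sAB)) => // x [x_zeta xQA].
have [->|x_c] := pselect (x = c); first by left.
have : (~` [set c]) x by []; rewrite cAB => -[Ax|]; last by right.
have : (~` [set zeta; xi]) x.
  by move=> [//|]; exact: separated_neq sAB Ax Bxi.
by rewrite zxPQ => -[Px|Qx]; [left|exfalso; apply: xQA].
Qed.

Lemma cut_point_separating_pair {zeta xi c} :
  ~ connected (~` [set zeta; xi]) -> separates c zeta xi ->
  cut_point zeta \/ cut_point xi.
Proof.
move=> disc [A [B [cAB sAB Azeta Bxi]]].
have zeta_c : (~` [set c]) zeta by rewrite cAB; left.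
have xi_c : (~` [set c]) xi by rewrite cAB; right.
have zx_c : (~` [set zeta; xi]) c.
  by move=> [e|e]; [apply: zeta_c|apply: xi_c]; rewrite e.
have [P [Q [zxPQ sPQ Pc [q Qq]]]] := not_connected_split disc zx_c.
have : (~` [set c]) q by move=> /esym; exact: separated_neq sPQ Pc Qq.
rewrite cAB => -[Aq|Bq]; [left|right].
- apply: (cut_point_of_crossing_separations cAB sAB Azeta Bxi zxPQ sPQ Pc).
  by exists q.
- apply: (cut_point_of_crossing_separations (A := B) (B := A) _ _ Bxi Azeta
    _ sPQ Pc); [by rewrite setUC|by rewrite separatedC| |by exists q].
  by rewrite -zxPQ setUC.
Qed.

Definition cyclic_class p : set T :=
  [set q | forall c, cut_point c -> ~ separates c p q].

Lemma cyclic_class_refl p : cyclic_class p p.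
Proof.
by move=> c _ [A [B [_ sAB Ap Bp]]]; exact: separated_neq sAB Ap Bp erefl.
Qed.

Lemma cyclic_class_sym {p q} : cyclic_class p q -> cyclic_class q p.
Proof. by move=> Cpq c cc /separatesC; exact: Cpq. Qed.

Lemma cyclic_class_trans {p q x} :
  ~ cut_point p -> cyclic_class q p -> cyclic_class p x -> cyclic_class q x.
Proof.
move=> np Cqp Cpx c cc [A [B [cAB sAB Aq Bx]]].
have : (~` [set c]) p by move=> /= pc; apply: np; rewrite pc.
rewrite cAB => -[Ap|Bp]; [apply: (Cpx c cc)|apply: (Cqp c cc)]; by exists A, B.
Qed.

Lemma cyclic_class_eq p q : ~ cut_point p -> ~ cut_point q ->
  cyclic_class p q -> cyclic_class p = cyclic_class q.
Proof.
move=> np nq Cpq; apply/seteqP; split => x.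
- exact: cyclic_class_trans np (cyclic_class_sym Cpq).
- exact: cyclic_class_trans nq Cpq.
Qed.

Lemma cyclic_element_class p : ~ cut_point p -> cyclic_element (cyclic_class p).
Proof. by move=> np; right; exists p; do 2?split => //; exact: cyclic_class_refl. Qed.

Lemma cyclic_element_eq_class {C p} :
  cyclic_element C -> C p -> ~ cut_point p -> C = cyclic_class p.
Proof.
move=> [[eta [ceta ->]] /= -> //|[r [nr [_ ->]]] Crp np].
exact: cyclic_class_eq.
Qed.

Lemma cyclic_class_cut_pair zeta xi : cut_pair zeta xi -> cyclic_class zeta xi.
Proof.
by move=> [_ disc nzeta nxi] c _ /(cut_point_separating_pair disc) [].
Qed.

End CutPairs.

Theorem lemma2p5 (R : realType) (T : pseudoMetricType R) :
  peano_continuum T ->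
  forall zeta xi : T, cut_pair zeta xi ->
  exists C : set T, [/\ cyclic_element C, [set zeta; xi] `<=` C &
    forall C' : set T, cyclic_element C' -> [set zeta; xi] `<=` C' -> C' = C].
Proof.
move=> _ zeta xi cp; have [_ _ nzeta _] := cp.
exists (cyclic_class zeta); split.
- exact: cyclic_element_class.
- by move=> x [->|->]; [exact: cyclic_class_refl|exact: cyclic_class_cut_pair].
- move=> C' C'e zxC'.
  by apply: cyclic_element_eq_class C'e _ nzeta; apply: zxC'; left.
Qed.
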